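(* Let $R$ be a reduced ring. Then the trivial extension $T(R,R)$ is almost Armendariz.
   Context: All rings are associative with identity. A ring is reduced if it has no nonzero nilpotent elements. For a ring $R$ and an $R$-bimodule $M$, the trivial extension $T(R,M)$ is $R\times M$ with componentwise addition and multiplication $(r_1,m_1)(r_2,m_2)=(r_1r_2, r_1m_2+m_1r_2)$; it is isomorphic to the ring of matrices $\begin{pmatrix} r& m\\ 0& r\end{pmatrix}$, $r\in R$, $m\in M$. For a ring $R$, $P(R)$ denotes the prime radical of $R$ (the intersection of all prime ideals of $R$, equivalently the set of strongly nilpotent elements of $R$). A ring $R$ is called almost Armendariz if whenever $f(x)=\sum_{i=0}^m a_ix^i$ and $g(x)=\sum_{j=0}^n b_jx^j\in R[x]$ satisfy $f(x)g(x)=0$, then $a_ib_j\in P(R)$ for all $0\le i\le m$, $0\le j\le n$. *)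

From HB Require Import structures.
From mathcomp Require Import all_boot all_order all_algebra.
Set Implicit Arguments. Unset Strict Implicit. Unset Printing Implicit Defensive.
Import GRing.Theory.
Local Open Scope ring_scope.

Definition reduced (R : nzRingType) : Prop :=
  forall (x : R) (n : nat), x ^+ n = 0 -> x = 0.

Definition two_sided_ideal (R : nzRingType) (I : R -> Prop) : Prop :=
  [/\ I 0,
      (forall x y, I x -> I y -> I (x - y)),
      (forall r x, I x -> I (r * x)) &
      (forall r x, I x -> I (x * r))].

Definition prime_ideal (R : nzRingType) (I : R -> Prop) : Prop :=
  [/\ two_sided_ideal I,
      ~ I 1 &
      (forall a b, (forall r, I (a * r * b)) -> I a \/ I b)].

Definition prime_radical (R : nzRingType) (x : R) : Prop :=
  forall I : R -> Prop, prime_ideal I -> I x.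

Definition almost_armendariz (R : nzRingType) : Prop :=
  forall f g : {poly R}, f * g = 0 ->
    forall i j : nat, (i < size f)%N -> (j < size g)%N ->
      prime_radical (f`_i * g`_j).

(** The trivial extension T(R,R) = R x R with
    (r1,m1)(r2,m2) = (r1 r2, r1 m2 + m1 r2). *)
Definition trivext (R : nzRingType) : Type := (R * R)%type.

Section TrivExt.
Variable R : nzRingType.

HB.instance Definition _ := GRing.Zmodule.copy (trivext R) (R * R)%type.

Definition te_one : trivext R := (1, 0).
Definition te_mul (x y : trivext R) : trivext R :=
  (x.1 * y.1, x.1 * y.2 + x.2 * y.1).

Lemma te_mulA : associative te_mul.
Proof.
move=> [a b] [c d] [e f]; rewrite /te_mul /=; congr pair; first by rewrite mulrA.
by rewrite mulrDr mulrDl !mulrA addrA.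
Qed.

Lemma te_mul1r : left_id te_one te_mul.
Proof. by move=> [a b]; rewrite /te_mul /= !mul1r mul0r addr0. Qed.

Lemma te_mulr1 : right_id te_one te_mul.
Proof. by move=> [a b]; rewrite /te_mul /= !mulr1 mulr0 add0r. Qed.

Lemma te_mulDl : left_distributive te_mul +%R.
Proof.
move=> [a b] [c d] [e f]; rewrite /te_mul /=; congr pair; first by rewrite mulrDl.
by rewrite !mulrDl addrACA.
Qed.

Lemma te_mulDr : right_distributive te_mul +%R.
Proof.
move=> [a b] [c d] [e f]; rewrite /te_mul /=; congr pair; first by rewrite mulrDr.
by rewrite !mulrDr addrACA.
Qed.

Lemma te_one_neq0 : te_one != 0.
Proof. by apply/eqP=> -[] /eqP; rewrite oner_eq0. Qed.

HB.instance Definition _ := GRing.Zmodule_isNzRing.Build (trivext R)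
  te_mulA te_mul1r te_mulr1 te_mulDl te_mulDr te_one_neq0.

Lemma trivext_mulE (x y : trivext R) : x * y = (x.1 * y.1, x.1 * y.2 + x.2 * y.1).
Proof. by []. Qed.

End TrivExt.

(** The first projection T(R,R) -> R is a ring morphism, so f g = 0 in
    T(R,R)[x] gives a product of zero in R[x]; a reduced ring is Armendariz,
    so every product a_i b_j has first component 0. An element y = (0, m)
    satisfies y r y = 0 for all r, so it lies in every prime ideal. *)

From HB Require Import structures.
From mathcomp Require Import all_boot all_order all_algebra.
From mathcomp Require Import zify.
Set Implicit Arguments. Unset Strict Implicit. Unset Printing Implicit Defensive.
Import GRing.Theory.
Local Open Scope ring_scope.

Section Reduced.
Variable R : nzRingType.
Hypothesis redR : reduced R.

Lemma reduced_mul0C (x y : R) : x * y = 0 -> y * x = 0.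
Proof. by move=> xy0; apply: (@redR _ 2); rewrite expr2 mulrA -(mulrA y) xy0 mulr0 mul0r. Qed.

Lemma reduced_sandwich0 (x y : R) : x * y * x = 0 -> x * y = 0.
Proof. by move=> xyx0; apply: (@redR _ 2); rewrite expr2 mulrA xyx0 mul0r. Qed.

(* Induction on (i, j): multiplying the (i+j)-th coefficient of f g on the
   right by f_i kills every term except f_i g_j f_i. *)
Lemma reduced_armendariz (f g : {poly R}) :
  f * g = 0 -> forall i j, f`_i * g`_j = 0.
Proof.
move=> fg0; elim/ltn_ind=> i IHi; elim/ltn_ind=> j IHj.
apply: reduced_sandwich0.
have lt_i_ij : (i < (i + j).+1)%N by rewrite ltnS leq_addr.
have /(congr1 (fun c => c * f`_i)) : (f * g)`_(i + j) = 0 by rewrite fg0 coef0.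
rewrite mul0r coefM mulr_suml (bigD1 (Ordinal lt_i_ij)) //= addKn.
rewrite big1 ?addr0 // => k /eqP ne_ki.
case: (ltngtP k i) => [lt_ki | lt_ik | eq_ki].
- by rewrite IHi // mul0r.
- have lt_j : (i + j - k < j)%N by have := ltn_ord k; lia.
  by rewrite -mulrA (reduced_mul0C (IHj _ lt_j)) mulr0.
- by case: ne_ki; apply: val_inj.
Qed.

End Reduced.

Lemma prime_radical_sandwich0 (R : nzRingType) (x : R) :
  (forall r, x * r * x = 0) -> prime_radical x.
Proof.
move=> xrx0 I [[I0 _ _ _] _ Iprime].
by have [] : I x \/ I x by apply: Iprime => r; rewrite xrx0.
Qed.

Section TrivExtFst.
Variable R : nzRingType.

Definition trivext_fst (x : trivext R) : R := x.1.

Lemma trivext_fst_is_nmod_morphism : nmod_morphism trivext_fst.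
Proof. by []. Qed.

Lemma trivext_fst_is_monoid_morphism : monoid_morphism trivext_fst.
Proof. by []. Qed.

HB.instance Definition _ :=
  GRing.isNmodMorphism.Build (trivext R) R trivext_fst trivext_fst_is_nmod_morphism.
HB.instance Definition _ :=
  GRing.isMonoidMorphism.Build (trivext R) R trivext_fst trivext_fst_is_monoid_morphism.

Lemma trivext_sandwich0 (x : trivext R) : trivext_fst x = 0 -> forall r, x * r * x = 0.
Proof.
case: x => a m /= -> r.
by rewrite !trivext_mulE /= !mul0r !mulr0 !add0r.
Qed.

End TrivExtFst.

Theorem corollary2p2 (R : nzRingType) :
  reduced R -> almost_armendariz (trivext R).
Proof.
move=> redR f g fg0 i j _ _.
apply: prime_radical_sandwich0; apply: trivext_sandwich0.
rewrite rmorphM -!coef_map; apply: (reduced_armendariz redR).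
by rewrite -rmorphM fg0 rmorph0.
Qed.
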